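(* Let $x \geq 1$ and $m \geq 2$ be integers. Let $\mathcal{C}_{m,x}$ be the set of binary words of length $m$ containing no pattern from $\mathcal{T}_x = \{0\mathbf{1}^y0,\ 1\mathbf{0}^y1 : 1\le y\le x\}$ as a contiguous substring, listed in increasing lexicographic order, with $g(\mathbf{c})$ the position (from $0$) of $\mathbf{c}$ in this list. Let $N(k,x) = |\mathcal{C}_{k,x}|$ for $k\ge1$ and $N(k,x)\triangleq 2$ for all integers $k\le 1$. Define the balanced index $g^{\mathrm{b}}(\mathbf{c})$ of $\mathbf{c}\in\mathcal{C}_{m,x}$ by $g^{\mathrm{b}}(\mathbf{c}) = g(\mathbf{c})$ if the leftmost bit of $\mathbf{c}$ is $0$, and $g^{\mathrm{b}}(\mathbf{c}) = N(m,x)-1-g(\mathbf{c})$ if the leftmost bit of $\mathbf{c}$ is $1$ (so that the codewords with indices $g$ and $N(m,x)-1-g$ share the same balanced index). Then for $\mathbf{c} = [c_{m-1}\,c_{m-2}\dots c_0] \in \mathcal{C}_{m,x}$ (with $c_{m-1}$ the leftmost bit): if $c_{m-1}=0$, $$g^{\mathrm{b}}(\mathbf{c}) = \frac12 \sum_{\substack{0\le i\le m-2\\ c_i=1}} N(i-x+1,x);$$ if $c_{m-1}=1$, $$g^{\mathrm{b}}(\mathbf{c}) = \frac12 \sum_{\substack{0\le i\le m-2\\ c_i=0}} N(i-x+1,x).$$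
   Context: $\mathbf{0}^r$ (resp. $\mathbf{1}^r$) denotes a run of $r$ consecutive $0$'s (resp. $1$'s). Lexicographic order on binary words of a fixed length is the order as binary numbers with the leftmost bit most significant. In the paper, a balanced LOCO code encodes each message by the pair of codewords with indices $g$ and $N(m,x)-1-g$ in $\mathcal{C}_{m,x}$, and $g^{\mathrm{b}}$ is the common index of this pair (equal to the index of the member beginning with $0$). *)

From mathcomp Require Import all_boot all_order all_algebra.
Set Implicit Arguments. Unset Strict Implicit. Unset Printing Implicit Defensive.
Import Order.TTheory GRing.Theory Num.Theory.

(* Binary words are seq bool, written leftmost bit first:
   c = [:: c_{m-1}; c_{m-2}; ...; c_0]. *)

Definition pat01 (y : nat) : seq bool := false :: rcons (nseq y true) false.
Definition pat10 (y : nat) : seq bool := true :: rcons (nseq y false) true.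

Definition has_forbidden (x : nat) (w : seq bool) : bool :=
  has (fun y => infix (pat01 y) w || infix (pat10 y) w) (iota 1 x).

Definition loco_code (m x : nat) : seq (seq bool) :=
  [seq tval t | t <- enum {: m.-tuple bool} & ~~ has_forbidden x (tval t)].

Definition bin_val (w : seq bool) : nat := foldl (fun acc (b : bool) => acc.*2 + b) 0 w.

(* g(c): position (from 0) of c in C_{m,x} listed in increasing lexicographic
   order = number of codewords strictly smaller than c. *)
Definition lex_index (m x : nat) (c : seq bool) : nat :=
  count (fun d => bin_val d < bin_val c) (loco_code m x).

Definition Nloco (k : int) (x : nat) : nat :=
  if (k <= 1)%R then 2 else size (loco_code `|k|%N x).

Definition bal_index (m x : nat) (c : seq bool) : nat :=
  if nth false c 0 then Nloco m%:Z x - 1 - lex_index m x c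
  else lex_index m x c.

(* bit c_i of c (c_{m-1} leftmost) *)
Definition bit (m : nat) (c : seq bool) (i : nat) : bool := nth false c (m - 1 - i).

From mathcomp Require Import all_boot all_order all_algebra zify.
Import Order.TTheory GRing.Theory Num.Theory.

(* Reading a word from left to right, a bit may follow a run of the opposite
   bit only if that run is longer than x or reaches the beginning of the word.
   Hence the number of valid continuations of length n of a valid prefix only
   depends on its debt D, the number of further copies of its last bit that are
   forced, and equals G(n + 1 - D), where G = N/2 satisfies
   G(k + 2) = G(k + 1) + G(k + 1 - x).
   The index of a word starting with 0 is the sum, over its bits c_i = 1, of the
   number of codewords that agree with it above position i and have 0 there.
   These terms are not G(i + 1 - x), but the discrepancies cancel along every run
   of ones because G(n + 1) = G(n + 1 - x) + sum_(n - x <= i < n) G(i + 1 - x).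
   Complementing all bits is an order-reversing bijection of the code, so a word
   starting with 1 has index N - 1 - g, where g is the index of its complement. *)

Fixpoint words (n : nat) : seq (seq bool) :=
  if n is n'.+1 then map (cons false) (words n') ++ map (cons true) (words n')
  else [:: [::]].

Lemma mem_words n w : (w \in words n) = (size w == n).
Proof.
have mem_cons (b c : bool) v (s : seq (seq bool)) :
    (b :: v \in map (cons c) s) = (b == c) && (v \in s).
  by apply/mapP/andP => [[u us [-> ->]]|[/eqP -> vs]]; last exists v.
elim: n w => [|n IH] [|b w]; rewrite /= ?mem_cat ?mem_cons //.
  by rewrite -[RHS]/false; apply/negbTE/norP; split; apply/mapP => -[].
by case: b; rewrite /= ?andbF ?orbF IH.
Qed.

Lemma uniq_words n : uniq (words n).
Proof.
have cons_inj (b : bool) : injective (cons b) by move=> ? ? [].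
elim: n => [|n IH] //=; rewrite cat_uniq !map_inj_uniq ?IH //= andbT.
by apply/hasPn => _ /mapP [w _ ->]; apply/mapP => -[].
Qed.

Lemma count_wordsS (P : pred (seq bool)) n :
  count P (words n.+1) = count (P \o cons false) (words n) + count (P \o cons true) (words n).
Proof. by rewrite count_cat !count_map. Qed.

Definition avoids (x : nat) (w : seq bool) : bool := ~~ has_forbidden x w.

Lemma perm_loco_code m x : perm_eq (loco_code m x) [seq w <- words m | avoids x w].
Proof.
have -> : loco_code m x = [seq w <- map val (enum {: m.-tuple bool}) | avoids x w].
  by rewrite filter_map.
apply: perm_filter; apply: uniq_perm.
- by rewrite map_inj_uniq ?enum_uniq //; apply: val_inj.
- exact: uniq_words.
move=> w; rewrite mem_words; apply/mapP/idP => [[t _ ->]|sw]; first by rewrite size_tuple.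
by exists (Tuple sw); rewrite ?mem_enum.
Qed.

Lemma count_loco_code m x (P : pred (seq bool)) :
  count P (loco_code m x) = count (fun w => avoids x w && P w) (words m).
Proof.
rewrite (permP (perm_loco_code m x)) count_filter.
by apply: eq_count => w /=; rewrite andbC.
Qed.

Lemma mem_loco_code m x w : (w \in loco_code m x) = (size w == m) && avoids x w.
Proof. by rewrite (perm_mem (perm_loco_code m x)) mem_filter mem_words andbC. Qed.

Lemma uniq_loco_code m x : uniq (loco_code m x).
Proof. by rewrite (perm_uniq (perm_loco_code m x)) filter_uniq ?uniq_words. Qed.

Lemma foldl_bin_val acc s :
  foldl (fun acc (b : bool) => acc.*2 + b) acc s = acc * 2 ^ size s + bin_val s.
Proof.
elim: s acc => [|b s IH] acc /=; first by rewrite muln1 addn0.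
by rewrite /bin_val /= !IH expnS; lia.
Qed.

Lemma bin_val_cons b s : bin_val (b :: s) = b * 2 ^ size s + bin_val s.
Proof. by rewrite {1}/bin_val /= foldl_bin_val. Qed.

Lemma bin_val_lt s : bin_val s < 2 ^ size s.
Proof. by elim: s => [|b s IH] //; rewrite bin_val_cons (expnS 2 (size s)); case: b; lia. Qed.

Lemma ltn_bin_val_cons a b d c : size d = size c ->
  (bin_val (a :: d) < bin_val (b :: c)) = (a < b) || (a == b) && (bin_val d < bin_val c).
Proof.
move=> sdc; have := bin_val_lt d; have := bin_val_lt c.
by rewrite !bin_val_cons sdc; case: a; case: b; lia.
Qed.

Lemma bin_val_inj_size d c : size d = size c -> bin_val d = bin_val c -> d = c.
Proof.
elim: d c => [|a d IH] [|b c] //= [sdc] eq_dc.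
have := ltn_bin_val_cons a b _ _ sdc; have := ltn_bin_val_cons b a _ _ (esym sdc).
rewrite eq_dc ltnn; case: a b {eq_dc} => [] [] //= lt_cd lt_dc;
  by congr (_ :: _); apply: IH => //; lia.
Qed.

Lemma bin_val_negb d : bin_val (map negb d) + bin_val d = (2 ^ size d).-1.
Proof.
elim: d => [|a d IH] //=; rewrite !bin_val_cons size_map expnS.
by have := expn_gt0 2 (size d); case: a; lia.
Qed.

Lemma ltn_bin_val_negb d c : size d = size c ->
  (bin_val (map negb d) < bin_val (map negb c)) = (bin_val c < bin_val d).
Proof.
move=> sdc; have := bin_val_negb d; have := bin_val_negb c.
by rewrite sdc; lia.
Qed.

(* A prefix p is handled as R = rev p, whose head is the last bit written.
   [debt x R] copies of that bit must still follow before the other bit may: a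
   run of length r <= x preceded by the other bit forbids a switch for x + 1 - r
   more steps, while a run reaching the start of the word forbids nothing. *)
Definition run_length (R : seq bool) : nat :=
  if R is a :: s then (find (predC1 a) s).+1 else 0.

Definition debt (x : nat) (R : seq bool) : nat :=
  if run_length R < size R then x.+1 - run_length R else 0.

Definition can_follow (x : nat) (R : seq bool) (b : bool) : bool :=
  if R is a :: _ then (b == a) || (debt x R == 0) else true.

Lemma prefix_run (a : bool) y s :
  prefix (rcons (nseq y a) (~~ a)) s = (find (predC1 a) s == y) && (y < size s).
Proof.
elim: y s => [|y IH] [|z s] //=; first by rewrite prefix0s; case: z; case: a.
by rewrite IH ltnS; case: z; case: a {IH}.
Qed.

Lemma has_eq_and (r : nat) (P : pred nat) s :
  has (fun y => (r == y) && P y) s = (r \in s) && P r.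
Proof.
apply/hasP/andP => [[y ys /andP [/eqP -> Py]] | [rs Pr]]; first by split.
by exists r; rewrite ?eqxx.
Qed.

Lemma has_forbidden_rcons x p b :
  has_forbidden x (rcons p b) = has_forbidden x p || ~~ can_follow x (rev p) b.
Proof.
have end_pattern y : suffix (pat01 y) (rcons p b) || suffix (pat10 y) (rcons p b)
    = (find (predC1 (~~ b)) (rev p) == y) && (y < size (rev p)).
  rewrite /pat01 /pat10 -!rcons_cons !suffix_rcons /suffix !rev_cons !rev_nseq.
  by case: b; rewrite /= ?orbF prefix_run.
rewrite /has_forbidden (eq_has (a2 := predU
    (fun y => infix (pat01 y) p || infix (pat10 y) p)
    (fun y => suffix (pat01 y) (rcons p b) || suffix (pat10 y) (rcons p b)))); last first.
  by move=> y /=; rewrite !infix_rconsl orbACA orbC.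
rewrite has_predU (eq_has end_pattern) has_eq_and mem_iota; congr (_ || _).
case: (rev p) => [|a s] {end_pattern} //=.
case: (a =P ~~ b) => [-> | /eqP nab]; last first.
  by case: a b nab => [] [].
rewrite /debt /= (_ : (b == ~~ b) = false); last by case: b.
by case: ifP; lia.
Qed.

Lemma avoids_rcons x p b : avoids x (rcons p b) = avoids x p && can_follow x (rev p) b.
Proof. by rewrite /avoids has_forbidden_rcons negb_or negbK. Qed.

Lemma avoids_catl x p d : avoids x (p ++ d) -> avoids x p.
Proof. by apply: contra; apply: sub_has => y /orP [] /(infix_catr d) ->; rewrite ?orbT. Qed.

Lemma avoids1 x b : avoids x [:: b].
Proof.
rewrite -[[:: b]]/(rcons [::] b) avoids_rcons andbT.
by apply/hasPn => y _; rewrite !infixs0.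
Qed.

Lemma run_length_negb R : run_length (map negb R) = run_length R.
Proof.
case: R => [|a s] //=; rewrite find_map; congr _.+1.
by apply: eq_find => z; case: z; case: a.
Qed.

Lemma can_follow_negb x R b : can_follow x (map negb R) (~~ b) = can_follow x R b.
Proof.
case: R => [|a s] //; rewrite /can_follow /debt run_length_negb size_map /=.
by case: a; case: b.
Qed.

Lemma avoids_negb x w : avoids x (map negb w) = avoids x w.
Proof.
elim/last_ind: w => [|p b IH] //.
by rewrite map_rcons !avoids_rcons IH -map_rev can_follow_negb.
Qed.

Definition completions (x : nat) (R : seq bool) (n : nat) : nat :=
  count (fun d => avoids x (rev R ++ d)) (words n).

Lemma completions0 x R : completions x R 0 = avoids x (rev R).
Proof. by rewrite /completions /= cats0 addn0. Qed.

Lemma completionsS x R n a :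
  completions x R n.+1 = completions x (a :: R) n + completions x (~~ a :: R) n.
Proof.
have -> : completions x R n.+1 = completions x (false :: R) n + completions x (true :: R) n.
  rewrite /completions count_wordsS.
  by congr (_ + _); apply: eq_count => d; rewrite /= rev_cons cat_rcons.
by case: a; rewrite // addnC.
Qed.

Lemma completions_invalid x R n : ~~ avoids x (rev R) -> completions x R n = 0.
Proof.
move=> bad_R; apply/eqP; rewrite -leqn0 leqNgt -has_count; apply: contra bad_R.
by case/hasP => d _ /avoids_catl.
Qed.

(* [halfN x k] is N(k,x)/2, with k = 0 standing for every k <= 0; the
   recursion has depth at most k. *)
Fixpoint halfN_fuel (x fuel k : nat) : nat :=
  if fuel is f.+1 then
    (if k <= 1 then 1 else halfN_fuel x f k.-1 + halfN_fuel x f (k.-1 - x))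
  else 1.

Definition halfN (x k : nat) : nat := halfN_fuel x k k.

Lemma halfN_fuel_enough x f1 f2 k :
  k <= f1 -> k <= f2 -> halfN_fuel x f1 k = halfN_fuel x f2 k.
Proof.
elim: f1 f2 k => [|f1 IH] [|f2] [|k] //= k_f1 k_f2; case: ifP => // k_gt1.
by rewrite (IH f2) ?(IH f2 (k - x)) //; lia.
Qed.

Lemma halfN_small x k : k <= 1 -> halfN x k = 1.
Proof. by case: k => [|[|]]. Qed.

Lemma halfN_rec x k : halfN x k.+2 = halfN x k.+1 + halfN x (k.+1 - x).
Proof. by rewrite /halfN (halfN_fuel_enough x (k.+1 - x) k.+1) ?leq_subr. Qed.

Lemma halfN_telescope x n : 0 < x ->
  halfN x n.+1 = halfN x (n.+1 - x) + \sum_(n - x <= i < n) halfN x (i.+1 - x).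
Proof.
move=> x_gt0; elim: n => [|n IH]; first by rewrite big_geq // !halfN_small //; lia.
rewrite halfN_rec IH big_nat_recr /=; last by lia.
case: (leqP x n) => x_le_n.
- rewrite (big_ltn_cond (m := n - x)) /=; last by lia.
  have -> : (n - x).+1 = n.+1 - x by lia.
  have -> : n.+2 - x = (n - x).+2 by lia.
  rewrite halfN_rec (_ : (n - x).+1 - x = n.+1 - x - x); last by lia.
  by rewrite (_ : (n - x).+1 = n.+1 - x); lia.
- have -> : n.+1 - x = n - x by lia.
  by rewrite (@halfN_small x (n - x)) ?(@halfN_small x (n.+2 - x)); lia.
Qed.

Lemma debt_repeat x a s : debt x (a :: a :: s) = (debt x (a :: s)).-1.
Proof. by rewrite /debt /= eqxx /=; case: ifP; case: ifP; lia. Qed.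

Lemma debt_switch x a s : debt x (~~ a :: a :: s) = x.
Proof. by rewrite /debt /=; case: a; rewrite subSS subn0. Qed.

Lemma avoids_rev_cons x a R :
  avoids x (rev (a :: R)) = avoids x (rev R) && can_follow x R a.
Proof. by rewrite rev_cons avoids_rcons revK. Qed.

Lemma avoids_switch x a s : avoids x (rev (a :: s)) ->
  avoids x (rev (~~ a :: a :: s)) = (debt x (a :: s) == 0).
Proof. by move=> ok_R; rewrite avoids_rev_cons ok_R; case: a {ok_R}. Qed.

Lemma completions_valid x R n : R != [::] -> avoids x (rev R) ->
  completions x R n = halfN x (n.+1 - debt x R).
Proof.
elim: n R => [|n IH] [|a s] // _ ok_R.
  by rewrite completions0 ok_R halfN_small //; lia.
have ok_aR : avoids x (rev (a :: a :: s)) by rewrite avoids_rev_cons ok_R /= eqxx.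
rewrite (completionsS _ _ _ a) IH // debt_repeat.
case: (posnP (debt x (a :: s))) => [no_debt | in_debt].
- rewrite IH ?avoids_switch ?no_debt // debt_switch -halfN_rec.
  by congr (halfN x _); lia.
- rewrite completions_invalid ?avoids_switch ?(gtn_eqF in_debt) // addn0.
  by move: (debt x (a :: s)) in_debt => [|D] // _; rewrite subSS.
Qed.

Lemma size_loco_code x k : size (loco_code k.+1 x) = 2 * halfN x k.+1.
Proof.
transitivity (completions x [::] k.+1).
  by rewrite -count_predT count_loco_code; apply: eq_count => d; rewrite andbT.
by rewrite (completionsS _ _ _ false) !completions_valid ?avoids1 // !subn0 addnn mul2n.
Qed.

Lemma Nloco_shift x i : 0 < x -> Nloco (i%:Z - x%:Z + 1)%R x = 2 * halfN x (i.+1 - x).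
Proof.
move=> x_gt0; rewrite /Nloco; case: ifP => [small | /negbT large].
  by rewrite halfN_small //; lia.
rewrite (_ : `|(i%:Z - x%:Z + 1)%R|%N = (i - x).+1) ?size_loco_code; last by lia.
by congr (2 * halfN x _); lia.
Qed.

Definition smaller (x : nat) (R c : seq bool) : nat :=
  count (fun d => (bin_val d < bin_val c) && avoids x (rev R ++ d)) (words (size c)).

Lemma smaller_cons x R (b : bool) c :
  smaller x R (b :: c) =
  (if b then completions x (false :: R) (size c) else 0) + smaller x (b :: R) c.
Proof.
rewrite /smaller /= count_cat !count_map /completions.
have step a d : d \in words (size c) ->
    (bin_val (a :: d) < bin_val (b :: c)) && avoids x (rev R ++ a :: d) =
    ((a < b) || (a == b) && (bin_val d < bin_val c)) && avoids x (rev (a :: R) ++ d).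
  by rewrite mem_words rev_cons cat_rcons => /eqP /ltn_bin_val_cons ->.
rewrite !(eq_in_count (step _)); case: b {step} => /=.
- by congr (_ + _); apply: eq_count => d; rewrite andbT.
- by rewrite count_pred0 addn0.
Qed.

Lemma lex_index_smaller m x c : size c = m -> lex_index m x c = smaller x [::] c.
Proof.
move=> <-; rewrite /lex_index count_loco_code.
by apply: eq_count => d; rewrite andbC.
Qed.

Fixpoint weight (x : nat) (s : seq bool) : nat :=
  if s is b :: s' then (if b then halfN x ((size s').+1 - x) else 0) + weight x s' else 0.

(* While the last run of ones still has a debt D, the next D bits are forced
   to be ones: each contributes nothing to [smaller] but is counted by
   [weight]. [pending] is that advance. *)
Definition pending (x : nat) (R : seq bool) (n : nat) : nat :=
  if head false R then \sum_(n - debt x R <= i < n) halfN x (i.+1 - x) else 0.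

Lemma smaller_pending x c R : 0 < x -> R != [::] -> avoids x (rev R ++ c) ->
  smaller x R c + pending x R (size c) = weight x c.
Proof.
move=> x_gt0; elim: c R => [|b c IH] [|a s] // _ ok_Rc.
  by rewrite /pending /=; case: ifP; rewrite ?big_geq.
have ok_c : avoids x (rev (b :: a :: s) ++ c) by rewrite rev_cons cat_rcons.
have /andP [ok_R ok_b] : avoids x (rev (a :: s)) && can_follow x (a :: s) b.
  by rewrite -avoids_rev_cons (avoids_catl _ _ _ ok_c).
rewrite smaller_cons /= -(IH (b :: a :: s)) // {IH ok_c ok_Rc}.
move: ok_b; rewrite /can_follow /pending /=.
case: a ok_R => ok_R; case: b => //=.
- rewrite debt_repeat; case: (posnP (debt x (true :: s))) => [no_debt | in_debt] _.
    rewrite completions_valid ?(avoids_switch x true) ?no_debt // (debt_switch x true).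
    by rewrite !big_geq //; lia.
  rewrite completions_invalid ?(avoids_switch x true) ?(gtn_eqF in_debt) //.
  rewrite big_nat_recr /=; last by lia.
  rewrite (_ : (size c).+1 - debt x (true :: s) = size c - (debt x (true :: s)).-1); last by lia.
  by rewrite add0n [RHS]addnCA [halfN x _ + _]addnC.
- by move/eqP => ->; rewrite big_geq.
- move/eqP => no_debt.
  rewrite completions_valid //; last by rewrite avoids_rev_cons ok_R.
  rewrite debt_repeat no_debt subn0 (debt_switch x false) (halfN_telescope _ _ x_gt0).
  by rewrite addn0 -addnA [X in _ + X]addnC.
Qed.

Lemma lex_index_false m x c : 0 < x -> size c = m -> avoids x (false :: c) ->
  lex_index m.+1 x (false :: c) = weight x c.
Proof.
move=> x_gt0 <- ok_c; rewrite lex_index_smaller // smaller_cons add0n.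
by rewrite -(smaller_pending x c [:: false]) //= addn0.
Qed.

Lemma perm_loco_code_negb m x : perm_eq (loco_code m x) (map (map negb) (loco_code m x)).
Proof.
have negbsK : involutive (map negb) := mapK negbK.
apply: uniq_perm; rewrite ?(map_inj_uniq (inv_inj negbsK)) ?uniq_loco_code //.
move=> w; rewrite -{2}(negbsK w) mem_map; last exact: inv_inj.
by rewrite !mem_loco_code size_map avoids_negb.
Qed.

Lemma count_ltn_eqn_gtn (T : Type) (f : T -> nat) k s :
  count (fun d => f d < k) s + count (fun d => f d == k) s + count (fun d => k < f d) s = size s.
Proof. by elim: s => //= d s <-; case: ltngtP; lia. Qed.

Lemma lex_index_negb m x c : size c = m ->
  lex_index m x (map negb c) = count (fun d => bin_val c < bin_val d) (loco_code m x).
Proof.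
move=> sc; rewrite /lex_index (permP (perm_loco_code_negb m x)) count_map.
apply: eq_in_count => d; rewrite mem_loco_code => /andP [/eqP sd _] /=.
by rewrite ltn_bin_val_negb // sd.
Qed.

Lemma count_bin_val_eq m x c : c \in loco_code m x ->
  count (fun d => bin_val d == bin_val c) (loco_code m x) = 1.
Proof.
move=> c_in; transitivity (count_mem c (loco_code m x)).
  2: by rewrite count_uniq_mem ?uniq_loco_code ?c_in.
move: c_in; rewrite mem_loco_code => /andP [/eqP sc _].
apply: eq_in_count => d; rewrite mem_loco_code => /andP [/eqP sd _] /=.
by apply/eqP/eqP => [/bin_val_inj_size -> | ->] //; rewrite sd.
Qed.

Lemma lex_index_compl m x c : c \in loco_code m x ->
  lex_index m x c + 1 + lex_index m x (map negb c) = size (loco_code m x).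
Proof.
move=> c_in; have := c_in; rewrite mem_loco_code => /andP [/eqP sc _].
rewrite lex_index_negb // -(count_ltn_eqn_gtn _ bin_val (bin_val c)).
by rewrite (count_bin_val_eq _ _ _ c_in).
Qed.

Lemma bit_cons b c i : i < size c -> bit (size c).+1 (b :: c) i = bit (size c) c i.
Proof.
by move=> lt_ic; rewrite /bit subn1 /= (_ : size c - i = (size c - 1 - i).+1) //; lia.
Qed.

Lemma bit_negb c i : i < size c -> bit (size c) (map negb c) i = ~~ bit (size c) c i.
Proof. by move=> lt_ic; rewrite /bit (nth_map false) //; lia. Qed.

Lemma big_bit_negb (F : nat -> nat) c :
  \sum_(0 <= i < size c | bit (size c) (map negb c) i) F i =
  \sum_(0 <= i < size c | ~~ bit (size c) c i) F i.
Proof.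
rewrite big_mkcond [RHS]big_mkcond; apply: eq_big_nat => i /andP [_ lt_ic].
by rewrite bit_negb.
Qed.

Lemma big_bit_cons (P : pred bool) (F : nat -> nat) b c :
  \sum_(0 <= i < (size c).+1 - 1 | P (bit (size c).+1 (b :: c) i)) F i =
  \sum_(0 <= i < size c | P (bit (size c) c i)) F i.
Proof.
rewrite subn1 big_mkcond [RHS]big_mkcond; apply: eq_big_nat => i /andP [_ lt_ic].
by rewrite bit_cons.
Qed.

Lemma weight_bits x s : 0 < x ->
  2 * weight x s = \sum_(0 <= i < size s | bit (size s) s i) Nloco (i%:Z - x%:Z + 1)%R x.
Proof.
move=> x_gt0; elim: s => [|b s IH]; first by rewrite big_geq.
rewrite /= mulnDr IH big_mkcond [RHS]big_mkcond big_nat_recr //= addnC.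
congr (_ + _).
  by apply: eq_big_nat => i /andP [_ lt_is]; rewrite bit_cons.
by rewrite /bit subn1 subnn /= Nloco_shift //; case: b.
Qed.

Theorem theorem3 (x m : nat) (c : seq bool) :
  1 <= x -> 2 <= m -> c \in loco_code m x ->
  (bit m c (m - 1) = false ->
     2 * bal_index m x c =
     \sum_(0 <= i < m - 1 | bit m c i) Nloco (i%:Z - x%:Z + 1)%R x) /\
  (bit m c (m - 1) = true ->
     2 * bal_index m x c =
     \sum_(0 <= i < m - 1 | ~~ bit m c i) Nloco (i%:Z - x%:Z + 1)%R x).
Proof.
move=> x_gt0 m_ge2 c_in.
have /andP [/eqP size_c ok_c] : (size c == m) && avoids x c by rewrite -mem_loco_code.
case: c => [|b c] in size_c ok_c c_in *; first by rewrite -size_c in m_ge2.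
have N_size : Nloco m x = size (loco_code m x) by rewrite /Nloco ifF //; lia.
rewrite -{}size_c {m_ge2} in N_size c_in *.
have -> : bit (size c).+1 (b :: c) ((size c).+1 - 1) = b by rewrite /bit subn1 subnn.
rewrite /bal_index /=; case: b in ok_c c_in N_size *; split=> // _.
  rewrite N_size -(lex_index_compl _ _ _ c_in).
  rewrite (_ : forall g g', g + 1 + g' - 1 - g = g'); last by lia.
  rewrite (lex_index_false _ _ _ x_gt0 (size_map negb c)); last first.
    by rewrite -[_ :: _]/(map negb (true :: c)) avoids_negb.
  by rewrite weight_bits // size_map big_bit_negb (big_bit_cons negb).
by rewrite (lex_index_false _ _ _ x_gt0 erefl ok_c) weight_bits // (big_bit_cons id).
Qed.
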